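(* Let $S,T$ be totally ordered sets and $M\colon S\times T\to\mathbf{Vec}$ pointwise finite-dimensional such that for all $x\le x'$ in $S$, $y\le y'$ in $T$, with $a=(x,y),b=(x,y'),c=(x',y),d=(x',y')$, the sequence $0\to M_a\to M_b\oplus M_c\to M_d\to0$ (maps $(M(a\le b),M(a\le c))$ and $M(b\le d)-M(c\le d)$) is exact. Then $\ker M^{\rightarrow}\cap\ker M^{\uparrow}=0$ and $M=\operatorname{Im}M^{\leftarrow}+\operatorname{Im}M^{\downarrow}$.
   Context: For $(p_1,p_2)\in S\times T$ define subspaces of $M_{(p_1,p_2)}$: $\operatorname{Im}M^{\leftarrow}_{(p_1,p_2)}=\bigcap_{q\le p_1}\operatorname{Im}M((q,p_2)\le(p_1,p_2))$, $\operatorname{Im}M^{\downarrow}_{(p_1,p_2)}=\bigcap_{q\le p_2}\operatorname{Im}M((p_1,q)\le(p_1,p_2))$, $\ker M^{\rightarrow}_{(p_1,p_2)}=\bigcup_{q\ge p_1}\ker M((p_1,p_2)\le(q,p_2))$, $\ker M^{\uparrow}_{(p_1,p_2)}=\bigcup_{q\ge p_2}\ker M((p_1,p_2)\le(p_1,q))$. For pointwise finite-dimensional $M$ these are submodules of $M$; $\operatorname{Im}M^{\leftarrow}+\operatorname{Im}M^{\downarrow}$ is the pointwise sum. *)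

From HB Require Import structures.
From mathcomp Require Import all_boot all_order all_algebra.
Set Implicit Arguments. Unset Strict Implicit. Unset Printing Implicit Defensive.
Import Order.TTheory GRing.Theory.
Local Open Scope ring_scope.

(* A pointwise finite-dimensional module M : S x T -> Vec_K is encoded by a
   dimension function d (M_p = K^(d p), as row vectors) and structure maps
   M p q : 'M_(d p, d q) acting on the right (v |-> v *m M p q),
   meaningful for p <= q in the product order. *)

Definition le2 (dS dT : Order.disp_t) (S : orderType dS) (T : orderType dT)
  (p q : S * T) : bool := ((p.1 <= q.1)%O && (p.2 <= q.2)%O).

Definition is_pmod (K : fieldType) dS dT (S : orderType dS) (T : orderType dT)
  (d : S * T -> nat) (M : forall p q : S * T, 'M[K]_(d p, d q)) : Prop :=
  (forall p, M p p = 1%:M) /\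
  (forall p q r, le2 p q -> le2 q r -> M p q *m M q r = M p r).

Definition squares_exact (K : fieldType) dS dT (S : orderType dS) (T : orderType dT)
  (d : S * T -> nat) (M : forall p q : S * T, 'M[K]_(d p, d q)) : Prop :=
  forall (x x' : S) (y y' : T), (x <= x')%O -> (y <= y')%O ->
    let a := (x, y) in let b := (x, y') in let c := (x', y) in let e := (x', y') in
    (forall v : 'rV[K]_(d a), v *m M a b = 0 -> v *m M a c = 0 -> v = 0) /\
    (forall (u : 'rV[K]_(d b)) (w : 'rV[K]_(d c)),
        u *m M b e - w *m M c e = 0 ->
        exists v : 'rV[K]_(d a), u = v *m M a b /\ w = v *m M a c) /\
    (forall z : 'rV[K]_(d e),
        exists (u : 'rV[K]_(d b)) (w : 'rV[K]_(d c)), z = u *m M b e - w *m M c e).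

Section Sub.
Variables (K : fieldType) (dS dT : Order.disp_t) (S : orderType dS) (T : orderType dT)
  (d : S * T -> nat) (M : forall p q : S * T, 'M[K]_(d p, d q)).

Definition ImLeft (p : S * T) (v : 'rV[K]_(d p)) : Prop :=
  forall q : S, (q <= p.1)%O -> exists w : 'rV[K]_(d (q, p.2)), v = w *m M (q, p.2) p.

Definition ImDown (p : S * T) (v : 'rV[K]_(d p)) : Prop :=
  forall q : T, (q <= p.2)%O -> exists w : 'rV[K]_(d (p.1, q)), v = w *m M (p.1, q) p.

Definition KerRight (p : S * T) (v : 'rV[K]_(d p)) : Prop :=
  exists q : S, (p.1 <= q)%O /\ v *m M p (q, p.2) = 0.

Definition KerUp (p : S * T) (v : 'rV[K]_(d p)) : Prop :=
  exists q : T, (p.2 <= q)%O /\ v *m M p (p.1, q) = 0.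
End Sub.

From HB Require Import structures.
From mathcomp Require Import all_boot all_order all_algebra.
From Stdlib Require Import Classical.
Import Order.TTheory GRing.Theory.
Local Open Scope ring_scope.

(* Fix p = (p1, p2).
   - Kernels: if v dies along the horizontal map p <= (q, p2) and along the
     vertical map p <= (p1, q'), then v lies in the kernel of the left map
     of the short exact sequence of the square spanned by p and (q, q'),
     which is injective; hence v = 0.
   - Images: the images of M((q, p2) <= p), for q <= p1, form a family of
     subspaces of M_p that grows with q.  Since M_p is finite-dimensional,
     a member of minimal rank is contained in every member, so Im M^<-_p is
     the image of a single map M((q0, p2) <= p); likewise Im M^v_p is the
     image of M((p1, r0) <= p).  Surjectivity of the right map of the exact
     sequence of the square spanned by (q0, r0) and p then writes every
     v in M_p as a sum of an element of each image. *)

Lemma ex_argmin {I : Type} (P : I -> Prop) (f : I -> nat) {i0 : I} :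
  P i0 -> exists i, P i /\ forall j, P j -> (f i <= f j)%N.
Proof.
move=> Pi0.
suff bounded n : forall i, P i -> (f i < n)%N ->
    exists i, P i /\ forall j, P j -> (f i <= f j)%N.
  exact: bounded _ i0 Pi0 (ltnSn _).
elim: n => // n IH i Pi fi_lt.
have [[j [Pj fj_lt]] | no_smaller] := classic (exists j, P j /\ (f j < f i)%N).
  by apply: IH Pj _; apply: leq_trans fj_lt fi_lt.
exists i; split=> // j Pj; rewrite leqNgt; apply/negP => fj_lt.
by apply: no_smaller; exists j.
Qed.

(* A family of subspaces of a finite-dimensional space, indexed by a totally
   ordered set and increasing on the elements below b, has a member (at some
   index i0 <= b) contained in all members below b: one of minimal rank. *)
Lemma increasing_subspaces_have_least (K : fieldType) (dI : Order.disp_t)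
    (I : orderType dI) (n : nat) (r : I -> nat) (A : forall i, 'M[K]_(r i, n))
    (b : I) :
  (forall i j, (i <= j)%O -> (j <= b)%O -> (A i <= A j)%MS) ->
  exists2 i0, (i0 <= b)%O & forall j, (j <= b)%O -> (A i0 <= A j)%MS.
Proof.
move=> incr.
have [i0 [i0b min_rank]] :=
  ex_argmin (fun i : I => (i <= b)%O) (fun i => \rank (A i)) (lexx b).
exists i0 => // j jb.
case: (leP j i0) => [ji0 | i0j]; last exact: incr _ _ (ltW i0j) jb.
have Aji0 := incr _ _ ji0 i0b.
by rewrite -(mxrank_leqif_sup Aji0).2 eqn_leq mxrankS // min_rank.
Qed.

Section PersistenceModule.
Variables (K : fieldType) (dS dT : Order.disp_t) (S : orderType dS)
  (T : orderType dT) (d : S * T -> nat) (M : forall p q : S * T, 'M[K]_(d p, d q)).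

Lemma kernels_right_up_trivial : squares_exact M ->
  forall (p : S * T) (v : 'rV[K]_(d p)), KerRight M v -> KerUp M v -> v = 0.
Proof.
move=> exact_sq [p1 p2] v [q [p1q vq]] [q' [p2q' vq']].
by have [inj _] := exact_sq p1 q p2 q' p1q p2q'; apply: inj.
Qed.

Hypothesis Mcomp : forall {p q r}, le2 p q -> le2 q r -> M p q *m M q r = M p r.

Lemma image_comp_sub (p q r : S * T) :
  le2 p q -> le2 q r -> (M p r <= M q r)%MS.
Proof. by move=> pq qr; rewrite -(Mcomp pq qr) submxMl. Qed.

Lemma ImLeft_single_map (p : S * T) : exists2 q0 : S, (q0 <= p.1)%O &
  forall u : 'rV[K]_(d (q0, p.2)), ImLeft M (u *m M (q0, p.2) p).
Proof.
have [q0 q0p least] : exists2 q0 : S, (q0 <= p.1)%O &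
    forall q, (q <= p.1)%O -> (M (q0, p.2) p <= M (q, p.2) p)%MS.
  apply: increasing_subspaces_have_least => q q' qq' q'p.
  by apply: image_comp_sub; rewrite /le2 /= ?qq' ?q'p lexx.
exists q0 => // u q qp; apply/submxP.
exact: submx_trans (submxMl _ _) (least _ qp).
Qed.

Lemma ImDown_single_map (p : S * T) : exists2 r0 : T, (r0 <= p.2)%O &
  forall u : 'rV[K]_(d (p.1, r0)), ImDown M (u *m M (p.1, r0) p).
Proof.
have [r0 r0p least] : exists2 r0 : T, (r0 <= p.2)%O &
    forall r, (r <= p.2)%O -> (M (p.1, r0) p <= M (p.1, r) p)%MS.
  apply: increasing_subspaces_have_least => r r' rr' r'p.
  by apply: image_comp_sub; rewrite /le2 /= ?rr' ?r'p lexx.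
exists r0 => // u r rp; apply/submxP.
exact: submx_trans (submxMl _ _) (least _ rp).
Qed.

Lemma left_plus_down_decomposition : squares_exact M ->
  forall (p : S * T) (v : 'rV[K]_(d p)),
    exists u w : 'rV[K]_(d p), ImLeft M u /\ ImDown M w /\ v = u + w.
Proof.
move=> exact_sq [p1 p2] v.
have [q0 q0p left] := ImLeft_single_map (p1, p2).
have [r0 r0p down] := ImDown_single_map (p1, p2).
have [_ [_ surj]] := exact_sq q0 p1 r0 p2 q0p r0p.
have [u [w ->]] := surj v.
exists (u *m M (q0, p2) (p1, p2)), ((- w) *m M (p1, r0) (p1, p2)).
by split; [exact: left | split; [exact: down | rewrite mulNmx]].
Qed.

End PersistenceModule.

Theorem lemma5p7 (K : fieldType) (dS dT : Order.disp_t)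
  (S : orderType dS) (T : orderType dT)
  (d : S * T -> nat) (M : forall p q : S * T, 'M[K]_(d p, d q)) :
  is_pmod M -> squares_exact M ->
  (forall (p : S * T) (v : 'rV[K]_(d p)),
      KerRight M v -> KerUp M v -> v = 0) /\
  (forall (p : S * T) (v : 'rV[K]_(d p)),
      exists u w : 'rV[K]_(d p),
        ImLeft M u /\ ImDown M w /\ v = u + w).
Proof.
move=> [_ Mcomp] exact_sq; split.
- exact: kernels_right_up_trivial.
- exact: left_plus_down_decomposition.
Qed.
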